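(* Consider the single-armed lazy restless bandit described in the context with fixed subsidy $\eta$, and let $\kappa=\frac{1}{1-\beta|p_{0,0}-p_{1,0}|}$, $b=\min\left\{1,\frac{R_1-R_0}{\rho_1-\rho_0}\right\}$, $c=\max\left\{1,\frac{R_1-R_0}{\rho_1-\rho_0}\right\}$. If $\beta<\frac{1+b}{4}$ or $0<|p_{0,0}-p_{1,0}|<\frac{1+b}{4}$, then for all $\pi\in[0,1]$, $\left|\frac{\partial V(\pi)}{\partial\pi}\right|,\ \left|\frac{\partial V_S(\pi)}{\partial\pi}\right|,\ \left|\frac{\partial V_{NS}(\pi)}{\partial\pi}\right|\le\kappa c(\rho_1-\rho_0)$, where at points of non-differentiability the right partial derivative is used.
   Context: Single-armed lazy restless bandit: an arm has a hidden state in $\{0,1\}$ evolving as a two-state Markov chain with transition probabilities $p_{i,j}$ ($p_{i,0}+p_{i,1}=1$). During each session the chain makes exactly $K\ge1$ transitions. In each session the decision maker plays the arm or not. If played with the arm in state $i$ at session start, an ACK is received with probability $\rho_i\in[0,1]$ and the expected reward is $R_i$; if not played, subsidy $\eta$ is received and nothing observed. Discount $\beta\in(0,1)$. Standing assumptions: $\rho_0<\rho_1$, $R_0<R_1$. Belief $\pi\in[0,1]$ = probability of state $0$. $R_S(\pi)=\pi R_0+(1-\pi)R_1$, $\rho(\pi)=\pi\rho_0+(1-\pi)\rho_1$, $\gamma_1(\pi)=\frac{(1-\pi)\rho_1p_{1,0}+\pi\rho_0p_{0,0}}{\rho_1(1-\pi)+\rho_0\pi}$, $\gamma_0(\pi)=\frac{(1-\pi)(1-\rho_1)p_{1,0}+\pi(1-\rho_0)p_{0,0}}{(1-\rho_1)(1-\pi)+(1-\rho_0)\pi}$,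 $\gamma_2(\pi)=(p_{0,0}-p_{1,0})^K\pi+p_{1,0}\sum_{j=0}^{K-1}(p_{0,0}-p_{1,0})^j$. $V_S,V_{NS},V$ are the unique bounded solution of $V_S(\pi)=R_S(\pi)+\beta\big(\rho(\pi)V(\gamma_1(\pi))+(1-\rho(\pi))V(\gamma_0(\pi))\big)$, $V_{NS}(\pi)=\eta+\beta V(\gamma_2(\pi))$, $V(\pi)=\max\{V_S(\pi),V_{NS}(\pi)\}$ (a term with zero coefficient is taken to be $0$). *)

From Stdlib Require Import Reals.
From Coquelicot Require Import Coquelicot.
Open Scope R_scope.

(* Belief pi = probability that the hidden state is 0. *)
Definition RS (R0 R1 pi : R) : R := pi * R0 + (1 - pi) * R1.
Definition rhoB (rho0 rho1 pi : R) : R := pi * rho0 + (1 - pi) * rho1.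

Definition gamma1 (p00 p10 rho0 rho1 pi : R) : R :=
  ((1 - pi) * rho1 * p10 + pi * rho0 * p00) / (rho1 * (1 - pi) + rho0 * pi).

Definition gamma0 (p00 p10 rho0 rho1 pi : R) : R :=
  ((1 - pi) * (1 - rho1) * p10 + pi * (1 - rho0) * p00)
  / ((1 - rho1) * (1 - pi) + (1 - rho0) * pi).

Fixpoint geom (d : R) (K : nat) : R :=
  match K with
  | O => 0
  | S k => geom d k + d ^ k
  end.

Definition gamma2 (p00 p10 : R) (K : nat) (pi : R) : R :=
  (p00 - p10) ^ K * pi + p10 * geom (p00 - p10) K.

(* The convention "a term with zero coefficient is 0" is automatic: when
   rho(pi) = 0 (resp. 1 - rho(pi) = 0) the term is multiplied by 0. *)
Definition bellman_solution (p00 p10 rho0 rho1 R0 R1 eta beta : R) (K : nat)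
  (VS VNS V : R -> R) : Prop :=
  (exists M, forall pi, 0 <= pi <= 1 ->
      Rabs (VS pi) <= M /\ Rabs (VNS pi) <= M /\ Rabs (V pi) <= M) /\
  (forall pi, 0 <= pi <= 1 ->
     VS pi = RS R0 R1 pi
             + beta * (rhoB rho0 rho1 pi * V (gamma1 p00 p10 rho0 rho1 pi)
                       + (1 - rhoB rho0 rho1 pi) * V (gamma0 p00 p10 rho0 rho1 pi)) /\
     VNS pi = eta + beta * V (gamma2 p00 p10 K pi) /\
     V pi = Rmax (VS pi) (VNS pi)).

Definition is_right_deriv (f : R -> R) (x l : R) : Prop :=
  filterlim (fun h => (f (x + h) - f x) / h) (at_right 0) (locally l).

Definition is_left_deriv (f : R -> R) (x l : R) : Prop :=
  filterlim (fun h => (f (x + h) - f x) / h) (at_left 0) (locally l).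

(* "the derivative in the sense of the paper is bounded by C in absolute value":
   on [0,1) the right derivative exists and is bounded; at the right endpoint
   pi = 1 (where no right derivative exists on [0,1]) the one-sided (left)
   derivative exists and is bounded. *)
Definition one_sided_deriv_bounded (f : R -> R) (C : R) : Prop :=
  (forall pi, 0 <= pi < 1 -> exists l, is_right_deriv f pi l /\ Rabs l <= C) /\
  (exists l, is_left_deriv f 1 l /\ Rabs l <= C).

From Stdlib Require Import Reals Lra Classical.
From Coquelicot Require Import Coquelicot.
Open Scope R_scope.

(* V is the uniform limit of the value iterates V_{n+1} = T V_n of the Bellman operator T,
   a beta-contraction for the sup norm on [0,1].  T preserves convexity: the play branch is a
   sum of perspectives rho f(gamma1) + (1 - rho) f(gamma0) whose numerators rho gamma1 and
   (1 - rho) gamma0 are affine in the belief, and the rest branch composes with the affine map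
   gamma2.  T also preserves L-Lipschitz continuity as soon as |R1 - R0| + beta |p00 - p10| L <= L,
   because the continuation after playing is (|p00 - p10| L)-Lipschitz.  L = kappa c (rho1 - rho0)
   satisfies this margin, so V, V_S and V_NS are convex and L-Lipschitz; a convex L-Lipschitz
   function has monotone difference quotients, whose one-sided limits exist and are bounded by L. *)

Lemma nondecreasing_bounded_right_limit (g : R -> R) (d L : R) : 0 < d ->
  (forall h1 h2, 0 < h1 <= h2 -> h2 <= d -> g h1 <= g h2) ->
  (forall h, 0 < h <= d -> Rabs (g h) <= L) ->
  exists l, filterlim g (at_right 0) (locally l) /\ Rabs l <= L.
Proof.
  intros Hd Hmono Hbound.
  set (E := fun v => exists h, 0 < h <= d /\ v = - g h).
  assert (HE_ub : is_upper_bound E L).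
  { intros v [h [Hh ->]]. pose proof (Hbound h Hh) as Hb. apply Rabs_le_between in Hb. lra. }
  assert (HE_inhabited : E (- g d)) by (exists d; split; [lra | reflexivity]).
  destruct (completeness E (ex_intro _ L HE_ub) (ex_intro _ _ HE_inhabited))
    as [m [Hm_ub Hm_least]].
  assert (Hinf : forall h, 0 < h <= d -> - m <= g h).
  { intros h Hh. enough (- g h <= m) by lra. apply Hm_ub. now exists h. }
  exists (- m). split.
  - apply filterlim_locally. intros eps.
    assert (Hnear : exists h0, 0 < h0 <= d /\ g h0 < - m + eps).
    { apply NNPP. intros Hfar.
      enough (m <= m - eps) by (pose proof (cond_pos eps); lra).
      apply Hm_least. intros v [h [Hh ->]].
      apply Rnot_lt_le. intros Hlt. apply Hfar. exists h. split; [exact Hh | lra]. }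
    destruct Hnear as [h0 [Hh0 Hgh0]].
    exists (mkposreal h0 (proj1 Hh0)). intros h Hh Hpos.
    change (Rabs (h - 0) < h0) in Hh. change (Rabs (g h - - m) < eps).
    rewrite Rminus_0_r in Hh. apply Rabs_lt_between in Hh.
    assert (g h <= g h0) by (apply Hmono; lra).
    assert (- m <= g h) by (apply Hinf; lra).
    apply Rabs_lt_between. pose proof (cond_pos eps). lra.
  - assert (- m <= g d) by (apply Hinf; lra).
    assert (m <= L) by (apply Hm_least, HE_ub).
    pose proof (Hbound d (conj Hd (Rle_refl d))) as Hgd. apply Rabs_le_between in Hgd.
    apply Rabs_le_between. lra.
Qed.

Lemma nondecreasing_bounded_left_limit (g : R -> R) (d L : R) : 0 < d ->
  (forall h1 h2, h1 <= h2 < 0 -> - d <= h1 -> g h1 <= g h2) ->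
  (forall h, - d <= h < 0 -> Rabs (g h) <= L) ->
  exists l, filterlim g (at_left 0) (locally l) /\ Rabs l <= L.
Proof.
  intros Hd Hmono Hbound.
  destruct (nondecreasing_bounded_right_limit (fun h => - g (- h)) d L Hd) as [l [Hl HlL]].
  - intros h1 h2 Hh Hh2. apply Ropp_le_contravar, Hmono; lra.
  - intros h Hh. rewrite Rabs_Ropp. apply Hbound. lra.
  - exists (- l). split; [| now rewrite Rabs_Ropp].
    apply (filterlim_ext (fun h => - (- g (- - h)))).
    { intros h. now rewrite !Ropp_involutive. }
    assert (Hrefl := filterlim_Ropp_left 0). rewrite Ropp_0 in Hrefl.
    apply (filterlim_comp _ _ _ (fun h => - g (- - h)) Ropp _ (locally l)).
    + exact (filterlim_comp _ _ _ Ropp (fun h => - g (- h)) _ _ _ Hrefl Hl).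
    + exact (filterlim_opp (V := R_NormedModule) l).
Qed.

Definition lipschitz01 (L : R) (f : R -> R) : Prop :=
  forall x y, 0 <= x <= 1 -> 0 <= y <= 1 -> Rabs (f x - f y) <= L * Rabs (x - y).

Definition convex01 (f : R -> R) : Prop :=
  forall x y t, 0 <= x <= 1 -> 0 <= y <= 1 -> 0 <= t <= 1 ->
  f (t * x + (1 - t) * y) <= t * f x + (1 - t) * f y.

Lemma div_dominated_unit a b : 0 <= a <= b -> 0 <= a / b <= 1.
Proof.
  intros Hab. destruct (Req_dec b 0) as [Hb | Hb].
  - replace a with 0 by lra. unfold Rdiv. rewrite Rmult_0_l. lra.
  - split.
    + apply Rmult_le_pos; [lra | left; apply Rinv_0_lt_compat; lra].
    + apply (Rmult_le_reg_r b); [lra |]. unfold Rdiv. rewrite Rmult_assoc, Rinv_l; lra.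
Qed.

Lemma mul_div_dominated a b : 0 <= a <= b -> b * (a / b) = a.
Proof.
  intros Hab. destruct (Req_dec b 0) as [Hb | Hb].
  - replace a with 0 by lra. rewrite Hb. ring.
  - field. exact Hb.
Qed.

Lemma convex01_three_points f a b c : convex01 f ->
  0 <= a -> a <= b <= c -> a < c -> c <= 1 ->
  (c - a) * f b <= (c - b) * f a + (b - a) * f c.
Proof.
  intros Hf Ha Hb Hac Hc.
  set (t := (c - b) / (c - a)).
  assert (Ht : 0 <= t <= 1) by (apply div_dominated_unit; lra).
  specialize (Hf a c t ltac:(lra) ltac:(lra) Ht).
  replace (t * a + (1 - t) * c) with b in Hf by (unfold t; field; lra).
  apply (Rmult_le_compat_l (c - a)) in Hf; [| lra].
  replace ((c - a) * (t * f a + (1 - t) * f c)) with ((c - b) * f a + (b - a) * f c) in Hf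
    by (unfold t; field; lra).
  exact Hf.
Qed.

Lemma convex01_slope_mono f x h1 h2 : convex01 f -> 0 <= x <= 1 ->
  0 <= x + h1 <= 1 -> 0 <= x + h2 <= 1 -> 0 < h1 * h2 -> h1 <= h2 ->
  (f (x + h1) - f x) / h1 <= (f (x + h2) - f x) / h2.
Proof.
  intros Hf Hx Hx1 Hx2 Hsign Hle.
  assert (Hcross : h2 * (f (x + h1) - f x) <= h1 * (f (x + h2) - f x)).
  { destruct (Rlt_or_le 0 h1) as [Hpos | Hneg].
    - pose proof (convex01_three_points f x (x + h1) (x + h2) Hf) as H3. nra.
    - pose proof (convex01_three_points f (x + h1) (x + h2) x Hf) as H3.
      assert (h2 < 0) by nra. nra. }
  apply (Rmult_le_reg_r (h1 * h2)); [exact Hsign |].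
  replace ((f (x + h1) - f x) / h1 * (h1 * h2)) with (h2 * (f (x + h1) - f x)) by (field; nra).
  replace ((f (x + h2) - f x) / h2 * (h1 * h2)) with (h1 * (f (x + h2) - f x)) by (field; nra).
  exact Hcross.
Qed.

Lemma lipschitz01_slope_bound f L x h : lipschitz01 L f ->
  0 <= x <= 1 -> 0 <= x + h <= 1 -> h <> 0 ->
  Rabs ((f (x + h) - f x) / h) <= L.
Proof.
  intros Hf Hx Hxh Hh.
  specialize (Hf _ _ Hxh Hx). replace (x + h - x) with h in Hf by ring.
  assert (0 < Rabs h) by (apply Rabs_pos_lt; exact Hh).
  unfold Rdiv. rewrite Rabs_mult, Rabs_inv.
  apply (Rmult_le_reg_r (Rabs h)); [assumption |].
  rewrite Rmult_assoc, Rinv_l; lra.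
Qed.

Lemma convex_lipschitz_one_sided_deriv_bounded f L :
  convex01 f -> lipschitz01 L f -> one_sided_deriv_bounded f L.
Proof.
  intros Hconv Hlip. split.
  - intros x Hx.
    apply (nondecreasing_bounded_right_limit _ (1 - x)); [lra | |].
    + intros h1 h2 Hh Hh2. apply convex01_slope_mono; auto; nra.
    + intros h Hh. apply lipschitz01_slope_bound; auto; lra.
  - apply (nondecreasing_bounded_left_limit _ 1); [lra | |].
    + intros h1 h2 Hh Hh1. apply convex01_slope_mono; auto; nra.
    + intros h Hh. apply lipschitz01_slope_bound; auto; lra.
Qed.

Lemma Rabs_Rmax_sub_le a b a' b' e : Rabs (a - a') <= e -> Rabs (b - b') <= e ->
  Rabs (Rmax a b - Rmax a' b') <= e.
Proof.
  intros Ha Hb. apply Rabs_le_between in Ha. apply Rabs_le_between in Hb.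
  apply Rabs_le_between. unfold Rmax. destruct (Rle_dec a b), (Rle_dec a' b'); lra.
Qed.

Lemma lipschitz01_max L f g : lipschitz01 L f -> lipschitz01 L g ->
  lipschitz01 L (fun x => Rmax (f x) (g x)).
Proof. intros Hf Hg x y Hx Hy. apply Rabs_Rmax_sub_le; auto. Qed.

Lemma convex01_max f g : convex01 f -> convex01 g -> convex01 (fun x => Rmax (f x) (g x)).
Proof.
  intros Hf Hg x y t Hx Hy Ht.
  specialize (Hf x y t Hx Hy Ht). specialize (Hg x y t Hx Hy Ht).
  pose proof (Rmax_l (f x) (g x)). pose proof (Rmax_r (f x) (g x)).
  pose proof (Rmax_l (f y) (g y)). pose proof (Rmax_r (f y) (g y)).
  apply Rmax_lub; nra.
Qed.

Lemma lipschitz01_ext L f g : (forall x, 0 <= x <= 1 -> f x = g x) ->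
  lipschitz01 L f -> lipschitz01 L g.
Proof. intros Hfg Hf x y Hx Hy. rewrite <- !Hfg by assumption. auto. Qed.

Lemma convex01_ext f g : (forall x, 0 <= x <= 1 -> f x = g x) -> convex01 f -> convex01 g.
Proof. intros Hfg Hf x y t Hx Hy Ht. rewrite <- !Hfg by (auto; split; nra). auto. Qed.

Lemma lipschitz01_scaled f L a u v : lipschitz01 L f -> 0 <= u <= 1 -> 0 <= v <= 1 ->
  Rabs (a * (f u - f v)) <= L * Rabs (a * (u - v)).
Proof.
  intros Hf Hu Hv. specialize (Hf u v Hu Hv).
  rewrite !Rabs_mult. pose proof (Rabs_pos a). nra.
Qed.

Lemma convex01_perspective f t rx ry gx gy gz : convex01 f -> 0 <= t <= 1 ->
  0 <= rx -> 0 <= ry -> 0 <= gx <= 1 -> 0 <= gy <= 1 ->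
  (t * rx + (1 - t) * ry) * gz = t * rx * gx + (1 - t) * ry * gy ->
  (t * rx + (1 - t) * ry) * f gz <= t * rx * f gx + (1 - t) * ry * f gy.
Proof.
  intros Hf Ht Hrx Hry Hgx Hgy Hgz.
  set (rz := t * rx + (1 - t) * ry) in *.
  assert (Hwx : 0 <= t * rx) by (apply Rmult_le_pos; lra).
  assert (Hwy : 0 <= (1 - t) * ry) by (apply Rmult_le_pos; lra).
  destruct (Req_dec rz 0) as [Hz | Hz].
  - rewrite Hz. unfold rz in Hz.
    replace (t * rx) with 0 by lra. replace ((1 - t) * ry) with 0 by lra. lra.
  - set (w := t * rx / rz).
    assert (Hw : 0 <= w <= 1) by (apply div_dominated_unit; unfold rz; lra).
    assert (Hgz_mix : gz = w * gx + (1 - w) * gy).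
    { apply (Rmult_eq_reg_l rz); [| exact Hz]. rewrite Hgz. unfold w, rz in *. field. exact Hz. }
    specialize (Hf gx gy w Hgx Hgy Hw). rewrite <- Hgz_mix in Hf.
    apply (Rmult_le_compat_l rz) in Hf; [| unfold rz; lra].
    replace (rz * (w * f gx + (1 - w) * f gy)) with (t * rx * f gx + (1 - t) * ry * f gy) in Hf
      by (unfold w, rz in *; field; exact Hz).
    exact Hf.
Qed.

Lemma le_of_geometric_slack a b C beta : 0 < beta < 1 -> 0 <= C ->
  (forall n, a <= b + beta ^ n * C) -> a <= b.
Proof.
  intros Hbeta HC Hslack. apply Rnot_lt_le. intros Hlt.
  assert (Heps : 0 < (a - b) / (C + 1)) by (apply Rdiv_lt_0_compat; lra).
  destruct (pow_lt_1_zero beta ltac:(rewrite Rabs_pos_eq; lra) _ Heps) as [N HN].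
  specialize (HN N (Nat.le_refl N)). specialize (Hslack N).
  rewrite Rabs_pos_eq in HN by (apply pow_le; lra).
  apply (Rmult_lt_compat_r (C + 1)) in HN; [| lra].
  replace ((a - b) / (C + 1) * (C + 1)) with (a - b) in HN by (field; lra).
  pose proof (pow_le beta N ltac:(lra)). nra.
Qed.

Section BeliefUpdate.

Variables p00 p10 rho0 rho1 : R.
Hypothesis Hp00 : 0 <= p00 <= 1.
Hypothesis Hp10 : 0 <= p10 <= 1.
Hypothesis Hrho0 : 0 <= rho0 <= 1.
Hypothesis Hrho1 : 0 <= rho1 <= 1.
Hypothesis Hrho : rho0 < rho1.

Local Notation rho := (rhoB rho0 rho1).
Local Notation g1 := (gamma1 p00 p10 rho0 rho1).
Local Notation g0 := (gamma0 p00 p10 rho0 rho1).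

Definition gamma1_num (x : R) : R := (1 - x) * rho1 * p10 + x * rho0 * p00.
Definition gamma0_num (x : R) : R := (1 - x) * (1 - rho1) * p10 + x * (1 - rho0) * p00.

Definition play_continuation (f : R -> R) (x : R) : R :=
  rho x * f (g1 x) + (1 - rho x) * f (g0 x).

Lemma rhoB_range x : 0 <= x <= 1 -> 0 <= rho x <= 1.
Proof. intros Hx. unfold rhoB. split; nra. Qed.

Lemma rhoB_interior_or_endpoint x : 0 <= x <= 1 -> 0 < rho x < 1 \/ x = 0 \/ x = 1.
Proof.
  intros Hx. pose proof (rhoB_range x Hx) as Hr.
  destruct (Req_dec (rho x) 0) as [H0 | H0]; [right; right; unfold rhoB in H0; nra |].
  destruct (Req_dec (rho x) 1) as [H1 | H1]; [right; left; unfold rhoB in H1; nra |].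
  left. lra.
Qed.

Lemma gamma1_num_dominated x : 0 <= x <= 1 -> 0 <= gamma1_num x <= rho x.
Proof.
  intros Hx. unfold gamma1_num, rhoB.
  assert (0 <= (1 - x) * rho1) by nra. assert (0 <= x * rho0) by nra.
  split; nra.
Qed.

Lemma gamma0_num_dominated x : 0 <= x <= 1 -> 0 <= gamma0_num x <= 1 - rho x.
Proof.
  intros Hx. unfold gamma0_num, rhoB.
  assert (0 <= (1 - x) * (1 - rho1)) by nra. assert (0 <= x * (1 - rho0)) by nra.
  split; nra.
Qed.

Lemma gamma1_eq x : g1 x = gamma1_num x / rho x.
Proof. unfold gamma1, gamma1_num, rhoB. f_equal. ring. Qed.

Lemma gamma0_eq x : g0 x = gamma0_num x / (1 - rho x).
Proof. unfold gamma0, gamma0_num, rhoB. f_equal. ring. Qed.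

Lemma gamma1_range x : 0 <= x <= 1 -> 0 <= g1 x <= 1.
Proof. intros Hx. rewrite gamma1_eq. apply div_dominated_unit, gamma1_num_dominated, Hx. Qed.

Lemma gamma0_range x : 0 <= x <= 1 -> 0 <= g0 x <= 1.
Proof. intros Hx. rewrite gamma0_eq. apply div_dominated_unit, gamma0_num_dominated, Hx. Qed.

Lemma rhoB_mul_gamma1 x : 0 <= x <= 1 -> rho x * g1 x = gamma1_num x.
Proof. intros Hx. rewrite gamma1_eq. apply mul_div_dominated, gamma1_num_dominated, Hx. Qed.

Lemma rhoB_mul_gamma0 x : 0 <= x <= 1 -> (1 - rho x) * g0 x = gamma0_num x.
Proof. intros Hx. rewrite gamma0_eq. apply mul_div_dominated, gamma0_num_dominated, Hx. Qed.

Lemma play_continuation_0 f : play_continuation f 0 = f p10.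
Proof.
  unfold play_continuation. rewrite gamma1_eq, gamma0_eq.
  replace (rho 0) with rho1 by (unfold rhoB; ring).
  unfold gamma1_num, gamma0_num.
  replace ((1 - 0) * rho1 * p10 + 0 * rho0 * p00) with (rho1 * p10) by ring.
  replace ((1 - 0) * (1 - rho1) * p10 + 0 * (1 - rho0) * p00) with ((1 - rho1) * p10) by ring.
  replace (rho1 * p10 / rho1) with p10 by (field; lra).
  destruct (Req_dec rho1 1) as [-> | Hne].
  - ring.
  - replace ((1 - rho1) * p10 / (1 - rho1)) with p10 by (field; lra). ring.
Qed.

Lemma play_continuation_1 f : play_continuation f 1 = f p00.
Proof.
  unfold play_continuation. rewrite gamma1_eq, gamma0_eq.
  replace (rho 1) with rho0 by (unfold rhoB; ring).
  unfold gamma1_num, gamma0_num.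
  replace ((1 - 1) * rho1 * p10 + 1 * rho0 * p00) with (rho0 * p00) by ring.
  replace ((1 - 1) * (1 - rho1) * p10 + 1 * (1 - rho0) * p00) with ((1 - rho0) * p00) by ring.
  replace ((1 - rho0) * p00 / (1 - rho0)) with p00 by (field; lra).
  destruct (Req_dec rho0 0) as [-> | Hne].
  - ring.
  - replace (rho0 * p00 / rho0) with p00 by (field; lra). ring.
Qed.

Lemma play_continuation_convex f : convex01 f -> convex01 (play_continuation f).
Proof.
  intros Hf x y t Hx Hy Ht.
  assert (Hz : 0 <= t * x + (1 - t) * y <= 1) by (split; nra).
  pose proof (rhoB_range x Hx). pose proof (rhoB_range y Hy).
  assert (Hack := convex01_perspective f t (rho x) (rho y) (g1 x) (g1 y)
    (g1 (t * x + (1 - t) * y)) Hf Ht ltac:(lra) ltac:(lra) (gamma1_range x Hx) (gamma1_range y Hy)).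
  assert (Hnack := convex01_perspective f t (1 - rho x) (1 - rho y) (g0 x) (g0 y)
    (g0 (t * x + (1 - t) * y)) Hf Ht ltac:(lra) ltac:(lra) (gamma0_range x Hx) (gamma0_range y Hy)).
  replace (t * rho x + (1 - t) * rho y) with (rho (t * x + (1 - t) * y)) in Hack
    by (unfold rhoB; ring).
  replace (t * (1 - rho x) + (1 - t) * (1 - rho y)) with (1 - rho (t * x + (1 - t) * y)) in Hnack
    by (unfold rhoB; ring).
  rewrite !Rmult_assoc, !rhoB_mul_gamma1, !rhoB_mul_gamma0 in * by assumption.
  specialize (Hack ltac:(unfold gamma1_num; ring)).
  specialize (Hnack ltac:(unfold gamma0_num; ring)).
  unfold play_continuation. lra.
Qed.

Lemma play_continuation_sub_bound f g e x : 0 <= x <= 1 ->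
  (forall z, 0 <= z <= 1 -> Rabs (f z - g z) <= e) ->
  Rabs (play_continuation f x - play_continuation g x) <= e.
Proof.
  intros Hx Hfg. pose proof (rhoB_range x Hx).
  pose proof (Hfg _ (gamma1_range x Hx)) as E1. pose proof (Hfg _ (gamma0_range x Hx)) as E0.
  apply Rabs_le_between in E1. apply Rabs_le_between in E0. apply Rabs_le_between.
  unfold play_continuation. split; nra.
Qed.

Lemma belief_update_split x y : 0 <= x <= 1 -> 0 <= y <= 1 -> 0 < rho y < 1 ->
  exists c1 c2 c3, 0 <= c1 /\ 0 <= c2 /\ 0 <= c3 /\ c1 + c2 + c3 = 1 /\
    rho x * (g1 x - g1 y) = (p00 - p10) * (x - y) * c1 /\
    (1 - rho x) * (g0 x - g0 y) = (p00 - p10) * (x - y) * c2 /\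
    (rho x - rho y) * (g1 y - g0 y) = (p00 - p10) * (x - y) * c3.
Proof.
  intros Hx Hy Hry.
  exists (rho0 * rho1 / rho y), ((1 - rho0) * (1 - rho1) / (1 - rho y)),
    ((rho1 - rho0) ^ 2 * y * (1 - y) / (rho y * (1 - rho y))).
  assert (Hpos : 0 < rho y * (1 - rho y)) by nra.
  rewrite (gamma1_eq y), (gamma0_eq y).
  repeat split.
  - apply Rmult_le_pos; [nra | left; apply Rinv_0_lt_compat; lra].
  - apply Rmult_le_pos; [nra | left; apply Rinv_0_lt_compat; lra].
  - apply Rmult_le_pos; [| left; apply Rinv_0_lt_compat; lra].
    pose proof (pow2_ge_0 (rho1 - rho0)). apply Rmult_le_pos; nra.
  - unfold rhoB in *. field. lra.
  - rewrite Rmult_minus_distr_l, rhoB_mul_gamma1 by exact Hx.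
    unfold gamma1_num, rhoB in *. field. lra.
  - rewrite Rmult_minus_distr_l, rhoB_mul_gamma0 by exact Hx.
    unfold gamma0_num, rhoB in *. field. lra.
  - unfold gamma1_num, gamma0_num, rhoB in *. field. lra.
Qed.

Lemma play_continuation_lipschitz_at f L x y : lipschitz01 L f ->
  0 <= x <= 1 -> 0 <= y <= 1 -> 0 < rho y < 1 ->
  Rabs (play_continuation f x - play_continuation f y) <= L * Rabs (p00 - p10) * Rabs (x - y).
Proof.
  intros Hf Hx Hy Hry.
  destruct (belief_update_split x y Hx Hy Hry)
    as (c1 & c2 & c3 & Hc1 & Hc2 & Hc3 & Hsum & E1 & E0 & Erho).
  assert (B1 := lipschitz01_scaled f L (rho x) _ _ Hf (gamma1_range x Hx) (gamma1_range y Hy)).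
  assert (B0 := lipschitz01_scaled f L (1 - rho x) _ _ Hf (gamma0_range x Hx) (gamma0_range y Hy)).
  assert (Brho := lipschitz01_scaled f L (rho x - rho y) _ _ Hf
                    (gamma1_range y Hy) (gamma0_range y Hy)).
  rewrite E1 in B1. rewrite E0 in B0. rewrite Erho in Brho.
  assert (Habs : forall c, 0 <= c ->
    Rabs ((p00 - p10) * (x - y) * c) = Rabs (p00 - p10) * Rabs (x - y) * c).
  { intros c Hc. now rewrite !Rabs_mult, (Rabs_pos_eq c). }
  rewrite Habs in B1, B0, Brho by assumption.
  unfold play_continuation.
  replace (rho x * f (g1 x) + (1 - rho x) * f (g0 x)
           - (rho y * f (g1 y) + (1 - rho y) * f (g0 y)))
    with (rho x * (f (g1 x) - f (g1 y)) + (1 - rho x) * (f (g0 x) - f (g0 y))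
          + (rho x - rho y) * (f (g1 y) - f (g0 y))) by ring.
  eapply Rle_trans; [apply Rabs_triang |].
  eapply Rle_trans; [apply Rplus_le_compat_r, Rabs_triang |].
  replace (L * Rabs (p00 - p10) * Rabs (x - y))
    with (L * (Rabs (p00 - p10) * Rabs (x - y) * (c1 + c2 + c3))) by (rewrite Hsum; ring).
  lra.
Qed.

(* If rho is 0 or 1 at both points, they are endpoints of [0,1], where the state is known and
   play_continuation evaluates f at p10 or p00. *)
Lemma play_continuation_lipschitz f L : lipschitz01 L f ->
  lipschitz01 (L * Rabs (p00 - p10)) (play_continuation f).
Proof.
  intros Hf x y Hx Hy.
  destruct (rhoB_interior_or_endpoint y Hy) as [Hry | Hy_end];
    [now apply play_continuation_lipschitz_at |].
  destruct (rhoB_interior_or_endpoint x Hx) as [Hrx | Hx_end].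
  { rewrite Rabs_minus_sym, (Rabs_minus_sym x). now apply play_continuation_lipschitz_at. }
  destruct Hx_end as [-> | ->], Hy_end as [-> | ->];
    rewrite ?play_continuation_0, ?play_continuation_1, ?Rminus_diag, ?Rabs_R0.
  - lra.
  - pose proof (Hf p10 p00 Hp10 Hp00) as Hend. rewrite (Rabs_minus_sym p10) in Hend.
    replace (Rabs (0 - 1)) with 1 by (rewrite Rabs_left; lra). lra.
  - pose proof (Hf p00 p10 Hp00 Hp10) as Hend.
    replace (Rabs (1 - 0)) with 1 by (rewrite Rabs_right; lra). lra.
  - lra.
Qed.

End BeliefUpdate.

Lemma geom_S d k : geom d (S k) = d * geom d k + 1.
Proof. induction k as [| k IH]; simpl in *; nra. Qed.

Lemma gamma2_S p00 p10 K x :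
  gamma2 p00 p10 (S K) x = p00 * gamma2 p00 p10 K x + (1 - gamma2 p00 p10 K x) * p10.
Proof. unfold gamma2. rewrite geom_S. simpl. ring. Qed.

Lemma gamma2_range p00 p10 K x : 0 <= p00 <= 1 -> 0 <= p10 <= 1 -> 0 <= x <= 1 ->
  0 <= gamma2 p00 p10 K x <= 1.
Proof.
  intros Hp00 Hp10 Hx. induction K as [| K IH].
  - unfold gamma2. simpl. lra.
  - rewrite gamma2_S. split; nra.
Qed.

Section BellmanOperator.

Variables p00 p10 rho0 rho1 R0 R1 eta beta : R.
Variable K : nat.
Hypothesis Hp00 : 0 <= p00 <= 1.
Hypothesis Hp10 : 0 <= p10 <= 1.
Hypothesis Hrho0 : 0 <= rho0 <= 1.
Hypothesis Hrho1 : 0 <= rho1 <= 1.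
Hypothesis Hrho : rho0 < rho1.
Hypothesis Hbeta : 0 < beta < 1.

Definition play_value (f : R -> R) (x : R) : R :=
  RS R0 R1 x + beta * play_continuation p00 p10 rho0 rho1 f x.

Definition rest_value (f : R -> R) (x : R) : R := eta + beta * f (gamma2 p00 p10 K x).

Definition bellman_op (f : R -> R) (x : R) : R := Rmax (play_value f x) (rest_value f x).

Fixpoint value_iter (n : nat) : R -> R :=
  match n with
  | O => fun _ => 0
  | S n => bellman_op (value_iter n)
  end.

Lemma bellman_op_contraction f g e x : 0 <= x <= 1 ->
  (forall z, 0 <= z <= 1 -> Rabs (f z - g z) <= e) ->
  Rabs (bellman_op f x - bellman_op g x) <= beta * e.
Proof.
  intros Hx Hfg. apply Rabs_Rmax_sub_le.
  - unfold play_value.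
    replace (RS R0 R1 x + beta * play_continuation p00 p10 rho0 rho1 f x
             - (RS R0 R1 x + beta * play_continuation p00 p10 rho0 rho1 g x))
      with (beta * (play_continuation p00 p10 rho0 rho1 f x
                    - play_continuation p00 p10 rho0 rho1 g x)) by ring.
    rewrite Rabs_mult, (Rabs_pos_eq beta) by lra.
    apply Rmult_le_compat_l; [lra | now apply play_continuation_sub_bound].
  - unfold rest_value.
    replace (eta + beta * f (gamma2 p00 p10 K x) - (eta + beta * g (gamma2 p00 p10 K x)))
      with (beta * (f (gamma2 p00 p10 K x) - g (gamma2 p00 p10 K x))) by ring.
    rewrite Rabs_mult, (Rabs_pos_eq beta) by lra.
    apply Rmult_le_compat_l; [lra | apply Hfg, gamma2_range; assumption].
Qed.

Lemma play_value_convex f : convex01 f -> convex01 (play_value f).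
Proof.
  intros Hf x y t Hx Hy Ht.
  pose proof (play_continuation_convex p00 p10 rho0 rho1 Hp00 Hp10 Hrho0 Hrho1 Hrho f Hf
    x y t Hx Hy Ht).
  unfold play_value, RS. nra.
Qed.

Lemma rest_value_convex f : convex01 f -> convex01 (rest_value f).
Proof.
  intros Hf x y t Hx Hy Ht. unfold rest_value.
  replace (gamma2 p00 p10 K (t * x + (1 - t) * y))
    with (t * gamma2 p00 p10 K x + (1 - t) * gamma2 p00 p10 K y) by (unfold gamma2; ring).
  pose proof (Hf _ _ t (gamma2_range p00 p10 K x Hp00 Hp10 Hx)
    (gamma2_range p00 p10 K y Hp00 Hp10 Hy) Ht).
  nra.
Qed.

Lemma bellman_op_convex f : convex01 f -> convex01 (bellman_op f).
Proof.
  intros Hf. apply convex01_max; [apply play_value_convex | apply rest_value_convex]; exact Hf.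
Qed.

Lemma value_iter_convex n : convex01 (value_iter n).
Proof.
  induction n as [| n IH]; simpl.
  - intros x y t _ _ _. lra.
  - now apply bellman_op_convex.
Qed.

Section LipschitzInvariant.

Variable L : R.
Hypothesis HL : Rabs (R1 - R0) + beta * L * Rabs (p00 - p10) <= L.

Lemma lipschitz_margin_nonneg : 0 <= L.
Proof.
  assert (Hd : Rabs (p00 - p10) <= 1) by (apply Rabs_le_between; lra).
  pose proof (Rabs_pos (p00 - p10)). pose proof (Rabs_pos (R1 - R0)).
  assert (Hk : 0 < 1 - beta * Rabs (p00 - p10)) by nra.
  apply Rnot_lt_le. intros HLneg.
  assert (L * (1 - beta * Rabs (p00 - p10)) < 0) by nra.
  lra.
Qed.

Lemma play_value_lipschitz f : lipschitz01 L f -> lipschitz01 L (play_value f).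
Proof.
  intros Hf x y Hx Hy.
  pose proof (play_continuation_lipschitz p00 p10 rho0 rho1 Hp00 Hp10 Hrho0 Hrho1 Hrho f L Hf
    x y Hx Hy) as Hcont.
  unfold play_value, RS.
  replace (x * R0 + (1 - x) * R1 + beta * play_continuation p00 p10 rho0 rho1 f x
           - (y * R0 + (1 - y) * R1 + beta * play_continuation p00 p10 rho0 rho1 f y))
    with ((R1 - R0) * (y - x) + beta * (play_continuation p00 p10 rho0 rho1 f x
                                        - play_continuation p00 p10 rho0 rho1 f y)) by ring.
  eapply Rle_trans; [apply Rabs_triang |].
  rewrite !Rabs_mult, (Rabs_pos_eq beta), (Rabs_minus_sym y) by lra.
  pose proof (Rabs_pos (x - y)).
  assert (beta * Rabs (play_continuation p00 p10 rho0 rho1 f x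
                       - play_continuation p00 p10 rho0 rho1 f y)
          <= beta * (L * Rabs (p00 - p10) * Rabs (x - y))) by (apply Rmult_le_compat_l; lra).
  nra.
Qed.

Lemma rest_value_lipschitz f : lipschitz01 L f -> lipschitz01 L (rest_value f).
Proof.
  intros Hf x y Hx Hy. unfold rest_value.
  pose proof (Hf _ _ (gamma2_range p00 p10 K x Hp00 Hp10 Hx)
    (gamma2_range p00 p10 K y Hp00 Hp10 Hy)) as Hstep.
  replace (gamma2 p00 p10 K x - gamma2 p00 p10 K y) with ((p00 - p10) ^ K * (x - y)) in Hstep
    by (unfold gamma2; ring).
  rewrite Rabs_mult, <- RPow_abs in Hstep.
  assert (Hpow : Rabs (p00 - p10) ^ K <= 1)
    by (rewrite <- (pow1 K); apply pow_incr; split; [apply Rabs_pos | apply Rabs_le_between; lra]).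
  replace (eta + beta * f (gamma2 p00 p10 K x) - (eta + beta * f (gamma2 p00 p10 K y)))
    with (beta * (f (gamma2 p00 p10 K x) - f (gamma2 p00 p10 K y))) by ring.
  rewrite Rabs_mult, (Rabs_pos_eq beta) by lra.
  assert (Hshrink : L * (Rabs (p00 - p10) ^ K * Rabs (x - y)) <= L * Rabs (x - y)).
  { apply Rmult_le_compat_l; [exact lipschitz_margin_nonneg |].
    rewrite <- (Rmult_1_l (Rabs (x - y))) at 2.
    apply Rmult_le_compat_r; [apply Rabs_pos | exact Hpow]. }
  pose proof (Rabs_pos (f (gamma2 p00 p10 K x) - f (gamma2 p00 p10 K y))).
  nra.
Qed.

Lemma bellman_op_lipschitz f : lipschitz01 L f -> lipschitz01 L (bellman_op f).
Proof.
  intros Hf.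
  apply lipschitz01_max; [apply play_value_lipschitz | apply rest_value_lipschitz]; exact Hf.
Qed.

Lemma value_iter_lipschitz n : lipschitz01 L (value_iter n).
Proof.
  induction n as [| n IH]; simpl.
  - intros x y _ _. rewrite Rminus_0_r, Rabs_R0.
    apply Rmult_le_pos; [apply lipschitz_margin_nonneg | apply Rabs_pos].
  - now apply bellman_op_lipschitz.
Qed.

End LipschitzInvariant.

Section FixedPoint.

Variables (V : R -> R) (M : R).
Hypothesis HV_fixed : forall x, 0 <= x <= 1 -> V x = bellman_op V x.
Hypothesis HV_bounded : forall x, 0 <= x <= 1 -> Rabs (V x) <= M.

Lemma value_iter_approx n x : 0 <= x <= 1 -> Rabs (value_iter n x - V x) <= beta ^ n * M.
Proof.
  revert x. induction n as [| n IH]; intros x Hx; simpl.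
  - rewrite Rminus_0_l, Rabs_Ropp, Rmult_1_l. now apply HV_bounded.
  - rewrite (HV_fixed x Hx), Rmult_assoc. now apply bellman_op_contraction.
Qed.

Lemma value_bound_nonneg : 0 <= M.
Proof. eapply Rle_trans; [apply Rabs_pos | apply (HV_bounded 0); lra]. Qed.

Lemma bellman_fixed_point_convex : convex01 V.
Proof.
  intros x y t Hx Hy Ht.
  assert (Hz : 0 <= t * x + (1 - t) * y <= 1) by (split; nra).
  pose proof value_bound_nonneg.
  apply (le_of_geometric_slack _ _ (2 * M) beta Hbeta ltac:(lra)). intros n.
  pose proof (value_iter_convex n x y t Hx Hy Ht).
  pose proof (value_iter_approx n x Hx) as Ex. pose proof (value_iter_approx n y Hy) as Ey.
  pose proof (value_iter_approx n _ Hz) as Ez.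
  apply Rabs_le_between in Ex. apply Rabs_le_between in Ey. apply Rabs_le_between in Ez.
  nra.
Qed.

Lemma bellman_fixed_point_lipschitz L :
  Rabs (R1 - R0) + beta * L * Rabs (p00 - p10) <= L -> lipschitz01 L V.
Proof.
  intros HL x y Hx Hy.
  pose proof value_bound_nonneg.
  apply (le_of_geometric_slack _ _ (2 * M) beta Hbeta ltac:(lra)). intros n.
  pose proof (value_iter_lipschitz L HL n x y Hx Hy) as Hn.
  pose proof (value_iter_approx n x Hx) as Ex. pose proof (value_iter_approx n y Hy) as Ey.
  apply Rabs_le_between in Ex. apply Rabs_le_between in Ey. apply Rabs_le_between in Hn.
  apply Rabs_le_between. lra.
Qed.

End FixedPoint.

End BellmanOperator.

Lemma geometric_margin A C d beta : 0 <= d <= 1 -> 0 < beta < 1 -> A <= C ->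
  A + beta * (1 / (1 - beta * d) * C) * d <= 1 / (1 - beta * d) * C.
Proof.
  intros Hd Hbeta HAC.
  assert (Hk : 0 < 1 - beta * d) by nra.
  apply (Rmult_le_reg_r (1 - beta * d)); [exact Hk |].
  replace ((A + beta * (1 / (1 - beta * d) * C) * d) * (1 - beta * d))
    with (A * (1 - beta * d) + beta * d * C) by (field; lra).
  replace (1 / (1 - beta * d) * C * (1 - beta * d)) with C by (field; lra).
  nra.
Qed.

Lemma le_Rmax_1_ratio_mul a b : 0 < b -> a <= Rmax 1 (a / b) * b.
Proof.
  intros Hb. apply (Rle_trans _ (a / b * b)).
  - right. field. lra.
  - apply Rmult_le_compat_r; [lra | apply Rmax_r].
Qed.

Theorem lemma9 (p00 p10 rho0 rho1 R0 R1 eta beta : R) (K : nat)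
  (VS VNS V : R -> R) :
  0 <= p00 <= 1 -> 0 <= p10 <= 1 ->
  0 <= rho0 <= 1 -> 0 <= rho1 <= 1 ->
  rho0 < rho1 -> R0 < R1 ->
  0 < beta < 1 -> (1 <= K)%nat ->
  bellman_solution p00 p10 rho0 rho1 R0 R1 eta beta K VS VNS V ->
  let kappa := 1 / (1 - beta * Rabs (p00 - p10)) in
  let b := Rmin 1 ((R1 - R0) / (rho1 - rho0)) in
  let c := Rmax 1 ((R1 - R0) / (rho1 - rho0)) in
  (beta < (1 + b) / 4 \/ (0 < Rabs (p00 - p10) /\ Rabs (p00 - p10) < (1 + b) / 4)) ->
  one_sided_deriv_bounded V (kappa * c * (rho1 - rho0)) /\
  one_sided_deriv_bounded VS (kappa * c * (rho1 - rho0)) /\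
  one_sided_deriv_bounded VNS (kappa * c * (rho1 - rho0)).
Proof.
  intros Hp00 Hp10 Hrho0 Hrho1 Hrho HR Hbeta _ [[M HM] Hbell] kappa b c _.
  assert (HVS : forall x, 0 <= x <= 1 -> play_value p00 p10 rho0 rho1 R0 R1 beta V x = VS x)
    by (intros x Hx; symmetry; apply (Hbell x Hx)).
  assert (HVNS : forall x, 0 <= x <= 1 -> rest_value p00 p10 eta beta K V x = VNS x)
    by (intros x Hx; symmetry; apply (Hbell x Hx)).
  assert (Hfix : forall x, 0 <= x <= 1 ->
                 V x = bellman_op p00 p10 rho0 rho1 R0 R1 eta beta K V x).
  { intros x Hx. unfold bellman_op. rewrite HVS, HVNS by exact Hx. apply (Hbell x Hx). }
  assert (HVbound : forall x, 0 <= x <= 1 -> Rabs (V x) <= M) by (intros x Hx; apply (HM x Hx)).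
  assert (Hmargin : Rabs (R1 - R0) + beta * (kappa * c * (rho1 - rho0)) * Rabs (p00 - p10)
                    <= kappa * c * (rho1 - rho0)).
  { replace (kappa * c * (rho1 - rho0)) with (kappa * (c * (rho1 - rho0))) by ring.
    apply geometric_margin; [split; [apply Rabs_pos | apply Rabs_le_between; lra] | exact Hbeta |].
    rewrite Rabs_pos_eq by lra. apply le_Rmax_1_ratio_mul. lra. }
  pose proof (bellman_fixed_point_convex _ _ _ _ _ _ _ _ _ Hp00 Hp10 Hrho0 Hrho1 Hrho Hbeta
    V M Hfix HVbound) as HVconv.
  pose proof (bellman_fixed_point_lipschitz _ _ _ _ _ _ _ _ _ Hp00 Hp10 Hrho0 Hrho1 Hrho Hbeta
    V M Hfix HVbound _ Hmargin) as HVlip.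
  split; [| split]; apply convex_lipschitz_one_sided_deriv_bounded.
  - exact HVconv.
  - exact HVlip.
  - refine (convex01_ext _ _ HVS _). now apply play_value_convex.
  - refine (lipschitz01_ext _ _ _ HVS _). eapply play_value_lipschitz; eassumption.
  - refine (convex01_ext _ _ HVNS _). now apply rest_value_convex.
  - refine (lipschitz01_ext _ _ _ HVNS _). eapply rest_value_lipschitz; eassumption.
Qed.
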